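(* Suppose Assumption A holds with $\beta,\gamma\in(0,\infty)$. Fix $\mu>0$ and $\sigma\in\mathcal X$, let $\pi^{\mu,\sigma}$ be a perturbed equilibrium, and let $0<\eta\le\frac{2\mu\gamma\rho^2}{\mu^2\gamma\rho^2(\gamma+2\beta)+8L^2}$. Let $(\pi^t)_{t\ge0}$ be any sequence in $\mathcal X$ such that for all $t\ge0$, $$D_\psi(\pi^{\mu,\sigma},\pi^{t+1})-D_\psi(\pi^{\mu,\sigma},\pi^t)+D_\psi(\pi^{t+1},\pi^t)\le\eta\sum_{i=1}^N\langle\nabla_{\pi_i}v_i(\pi^t)-\mu\nabla_{\pi_i}G(\pi_i^t,\sigma_i),\pi_i^{t+1}-\pi_i^{\mu,\sigma}\rangle.$$ Then for all $t\ge0$, $$D_\psi(\pi^{\mu,\sigma},\pi^t)\le D_\psi(\pi^{\mu,\sigma},\pi^0)\Big(1-\frac{\eta\mu\gamma}2\Big)^t.$$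
   Context: Game. Let $N\ge1$. For each $i\in[N]$, $\mathcal X_i\subseteq\mathbb R^{d_i}$ is a nonempty compact convex set, and $\mathcal X=\prod_i\mathcal X_i$. Each $v_i:\mathcal X\to\mathbb R$ is differentiable, with block gradient $\nabla_{\pi_i}v_i$. The norm is Euclidean, with $\|\pi\|^2=\sum_i\|\pi_i\|^2$. The game is monotone: $\sum_i\langle\nabla_{\pi_i}v_i(\pi)-\nabla_{\pi_i}v_i(\pi'),\pi_i-\pi_i'\rangle\le0$. The game is $L$-smooth: $\sum_i\|\nabla_{\pi_i}v_i(\pi)-\nabla_{\pi_i}v_i(\pi')\|^2\le L^2\|\pi-\pi'\|^2$. Regularizer. $\psi:\mathcal X_i\to\mathbb R$ is differentiable and $\rho$-strongly convex with respect to $\|\cdot\|$. Bregman divergence: $D_\psi(x,y)=\psi(x)-\psi(y)-\langle\nabla\psi(y),x-y\rangle$, and $D_\psi(\pi,\pi')=\sum_iD_\psi(\pi_i,\pi_i')$. Perturbation. $G:\mathcal X_i\times\mathcal X_i\to[0,\infty)$ is differentiable in its first argument, with gradient $\nabla_{\pi_i}G$ in that argument. $G(\cdot,\sigma_i)$ is strictly convex with minimum $0$ at $\sigma_i$. For $\mu>0$ and $\sigma\in\mathcal X$, $\pi^{\mu,\sigma}$ is a profile with $\pi_i^{\mu,\sigma}\in\arg\max_{\pi_i}\{v_i(\pi_i,\pi^{\mu,\sigma}_{-i})-\mu G(\pi_i,\sigma_i)\}$ for all $i$. Assumption A: for all $\sigma_i,\pi_i,\pi_i'\in\mathcal X_i$,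 $$\gamma D_\psi(\pi_i',\pi_i)\le G(\pi_i',\sigma_i)-G(\pi_i,\sigma_i)-\langle\nabla_{\pi_i}G(\pi_i,\sigma_i),\pi_i'-\pi_i\rangle\le\beta D_\psi(\pi_i',\pi_i).$$ *)

From HB Require Import structures.
From mathcomp Require Import all_boot all_order all_algebra.
From mathcomp Require Import all_classical all_reals all_analysis.
Set Implicit Arguments. Unset Strict Implicit. Unset Printing Implicit Defensive.
Import Order.TTheory GRing.Theory Num.Theory.
Import numFieldNormedType.Exports.
Local Open Scope classical_set_scope.
Local Open Scope ring_scope.

Section Defs.
Variable R : realType.

Definition dotv n (u v : 'rV[R]_n) : R := \sum_(j < n) u ord0 j * v ord0 j.
Definition sqnorm n (u : 'rV[R]_n) : R := dotv u u.
Definition enorm n (u : 'rV[R]_n) : R := Num.sqrt (sqnorm u).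

Definition convex_set_rv n (A : set 'rV[R]_n) : Prop :=
  forall x y t, A x -> A y -> 0 <= t <= 1 -> A (t *: x + (1 - t) *: y).

Definition is_grad_on n (A : set 'rV[R]_n) (f : 'rV[R]_n -> R)
  (g : 'rV[R]_n -> 'rV[R]_n) : Prop :=
  forall x, A x -> forall e : R, 0 < e -> exists2 del : R, 0 < del &
    forall y, A y -> enorm (y - x) < del ->
      `| f y - f x - dotv (g x) (y - x) | <= e * enorm (y - x).

Definition strongly_convex_on n (rho : R) (A : set 'rV[R]_n) (f : 'rV[R]_n -> R) : Prop :=
  forall x y t, A x -> A y -> 0 <= t <= 1 ->
    f (t *: x + (1 - t) *: y) <=
      t * f x + (1 - t) * f y - rho / 2 * t * (1 - t) * sqnorm (x - y).

Definition strictly_convex_on n (A : set 'rV[R]_n) (f : 'rV[R]_n -> R) : Prop :=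
  forall x y t, A x -> A y -> x != y -> 0 < t < 1 ->
    f (t *: x + (1 - t) *: y) < t * f x + (1 - t) * f y.

Definition bregman n (psi : 'rV[R]_n -> R) (gpsi : 'rV[R]_n -> 'rV[R]_n)
  (x y : 'rV[R]_n) : R := psi x - psi y - dotv (gpsi y) (x - y).

(* Strategy profiles of an N-player game with strategy spaces R^(d i). *)
Definition profile N (d : 'I_N -> nat) := forall i : 'I_N, 'rV[R]_(d i).

Definition in_prod N (d : 'I_N -> nat) (X : forall i, set 'rV[R]_(d i))
  (p : profile d) : Prop := forall i, X i (p i).

Definition psub N (d : 'I_N -> nat) (p q : profile d) : profile d :=
  fun i => p i - q i.

Definition pnorm N (d : 'I_N -> nat) (p : profile d) : R :=
  Num.sqrt (\sum_(i < N) sqnorm (p i)).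

(* Unilateral deviation: replace block i of p by x. *)
Definition upd N (d : 'I_N -> nat) (p : profile d) (i : 'I_N) (x : 'rV[R]_(d i))
  : profile d :=
  fun j => match i =P j with
           | ReflectT e => ecast k ('rV[R]_(d k)) e x
           | ReflectF _ => p j
           end.

Definition is_pgrad_on N (d : 'I_N -> nat) (X : forall i, set 'rV[R]_(d i))
  (v : profile d -> R) (gv : forall j : 'I_N, profile d -> 'rV[R]_(d j)) : Prop :=
  forall p, in_prod X p -> forall e : R, 0 < e -> exists2 del : R, 0 < del &
    forall q, in_prod X q -> pnorm (psub q p) < del ->
      `| v q - v p - \sum_(j < N) dotv (gv j p) (q j - p j) | <= e * pnorm (psub q p).

Definition pbregman N (d : 'I_N -> nat)
  (psi : forall i : 'I_N, 'rV[R]_(d i) -> R)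
  (gpsi : forall i : 'I_N, 'rV[R]_(d i) -> 'rV[R]_(d i))
  (p q : profile d) : R := \sum_(i < N) bregman (psi i) (gpsi i) (p i) (q i).

End Defs.

(* Writing D for the (product) Bregman divergence of psi, a = pi^t and
   b = pi^{t+1}, each block of the right-hand side of the update inequality
   is split as
     <g_i(a) - g_i(p), a_i - p_i> + <g_i(a) - g_i(p), b_i - a_i>
       + <g_i(p) - mu grad G(p_i), b_i - p_i>
       + mu <grad G(p_i) - grad G(a_i), b_i - p_i>,     p = pimu.
   The first terms sum to a nonpositive quantity (monotonicity), the second
   is bounded by Young's inequality, the third is nonpositive (first-order
   condition of the perturbed equilibrium) and the fourth is controlled by a
   three-point inequality coming from Assumption A.  Smoothness and the
   strong convexity of psi (D >= rho/2 |.|^2) then give the one-step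
   contraction D(p, b) <= (1 - eta mu gamma / 2) D(p, a), and the theorem
   follows by induction. *)
From HB Require Import structures.
From mathcomp Require Import all_boot all_order all_algebra.
From mathcomp Require Import all_classical all_reals all_analysis.
From mathcomp Require Import ring lra.
Import Order.TTheory GRing.Theory Num.Theory.
Import numFieldNormedType.Exports.
Local Open Scope classical_set_scope.
Local Open Scope ring_scope.
Set Implicit Arguments. Unset Strict Implicit.

Section InnerProduct.
Variables (R : realType) (n : nat).
Implicit Types (u w z : 'rV[R]_n) (a : R).

Lemma dotvDl u w z : dotv (u + w) z = dotv u z + dotv w z.
Proof. by rewrite /dotv -big_split; apply: eq_bigr => j _; rewrite !mxE mulrDl. Qed.

Lemma dotvDr u w z : dotv z (u + w) = dotv z u + dotv z w.
Proof. by rewrite /dotv -big_split; apply: eq_bigr => j _; rewrite !mxE mulrDr. Qed.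

Lemma dotvZl a u z : dotv (a *: u) z = a * dotv u z.
Proof. by rewrite /dotv mulr_sumr; apply: eq_bigr => j _; rewrite !mxE mulrA. Qed.

Lemma dotvZr a u z : dotv z (a *: u) = a * dotv z u.
Proof. by rewrite /dotv mulr_sumr; apply: eq_bigr => j _; rewrite !mxE mulrCA. Qed.

Lemma dotvNl u z : dotv (- u) z = - dotv u z.
Proof. by rewrite -scaleN1r dotvZl mulN1r. Qed.

Lemma dotvNr u z : dotv z (- u) = - dotv z u.
Proof. by rewrite -scaleN1r dotvZr mulN1r. Qed.

Lemma dotvBl u w z : dotv (u - w) z = dotv u z - dotv w z.
Proof. by rewrite dotvDl dotvNl. Qed.

Lemma dotvBr u w z : dotv z (u - w) = dotv z u - dotv z w.
Proof. by rewrite dotvDr dotvNr. Qed.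

Lemma dotv0r z : dotv z 0 = 0.
Proof. by rewrite -(scale0r 0) dotvZr mul0r. Qed.

Lemma sqnorm_ge0 u : 0 <= sqnorm u.
Proof. by rewrite /sqnorm /dotv sumr_ge0 // => j _; rewrite -expr2 sqr_ge0. Qed.

Lemma sqnormB u w : sqnorm (u - w) = sqnorm (w - u).
Proof. by rewrite /sqnorm -opprB dotvNl dotvNr opprK. Qed.

Lemma enormZ a u : 0 <= a -> enorm (a *: u) = a * enorm u.
Proof.
move=> a0; rewrite /enorm /sqnorm dotvZl dotvZr mulrA -expr2.
by rewrite sqrtrM ?sqr_ge0 // sqrtr_sqr ger0_norm.
Qed.

Lemma segment_sub a u w : a *: u + (1 - a) *: w - w = a *: (u - w).
Proof. by rewrite scalerBl scale1r scalerBr -addrA [(w - _) - w]addrAC subrr add0r. Qed.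

Lemma dotv_young e u w : 0 < e ->
  dotv u w <= e / 2 * sqnorm u + 1 / (2 * e) * sqnorm w.
Proof.
move=> e0; rewrite /sqnorm /dotv !mulr_sumr -big_split ler_sum // => j _.
set p := u ord0 j; set q := w ord0 j.
have square : e / 2 * (p * p) + 1 / (2 * e) * (q * q) - p * q
    = (e * p - q) ^+ 2 / (2 * e) by field; rewrite gt_eqF.
by rewrite -subr_ge0 square divr_ge0 ?sqr_ge0 // ltW ?mulr_gt0.
Qed.

End InnerProduct.

Section Calculus.
Variable R : realType.

(* This is how first-order information is extracted from the
   differentiability hypotheses. *)
Lemma slope_le (phi : R -> R) (g c K n : R) : 0 <= n ->
  (forall t, 0 < t < 1 -> phi t <= t * c + t ^+ 2 * K) ->
  (forall e, 0 < e -> exists2 del, 0 < del & forall t, 0 < t < 1 -> t * n < del ->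
     t * g - e * (t * n) <= phi t) ->
  g <= c.
Proof.
move=> n0 phi_up phi_lo.
have approx e : 0 < e -> g <= c + e * (n + `|K|).
  move=> e0; have [del del0 Hdel] := phi_lo e e0.
  have n1 : 0 < n + 1 by lra.
  pose t := Num.min (2^-1) (Num.min e (del / (n + 1))).
  have t0 : 0 < t by rewrite !lt_min invr_gt0 e0 divr_gt0 //; lra.
  have [t_half t_e t_del] : [/\ t <= 2^-1, t <= e & t <= del / (n + 1)].
    by move: (le_refl t); rewrite {1}/t !le_min => /and3P.
  have t01 : 0 < t < 1.
    by rewrite t0 (le_lt_trans t_half) // invf_lt1 //; lra.
  have tn : t * n < del by move: t_del; rewrite ler_pdivlMr //; nra.
  have tK : t * K <= e * `|K|.
    by apply: le_trans (ler_wpM2l (ltW t0) (ler_norm K)) _; rewrite ler_wpM2r.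
  have := Hdel t t01 tn; have := phi_up t t01.
  have -> : t ^+ 2 * K = t * (t * K) by rewrite expr2 mulrA.
  move=> up lo; have : t * (g - c - e * n - t * K) <= 0 by lra.
  rewrite pmulr_rle0 //; lra.
apply/ler_addgt0Pr => e e0.
have C0 : 0 < n + `|K| + 1 by have := normr_ge0 K; lra.
have := approx (e / (n + `|K| + 1)) (divr_gt0 e0 C0).
have : e / (n + `|K| + 1) * (n + `|K|) <= e.
  by rewrite mulrAC ler_pdivrMr //; have := normr_ge0 K; nra.
lra.
Qed.

Lemma grad_on_segment n (A : set 'rV[R]_n) f g x y :
  convex_set_rv A -> is_grad_on A f g -> A x -> A y ->
  forall e, 0 < e -> exists2 del, 0 < del & forall t, 0 < t < 1 ->
    t * enorm (x - y) < del ->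
    `|f (t *: x + (1 - t) *: y) - f y - t * dotv (g y) (x - y)|
      <= e * (t * enorm (x - y)).
Proof.
move=> cA gA Ax Ay e e0; have [del del0 Hdel] := gA y Ay e e0.
exists del => // t /andP [t0 t1] tn.
have Az : A (t *: x + (1 - t) *: y) by apply: cA => //; rewrite !ltW.
by have := Hdel _ Az; rewrite segment_sub enormZ ?dotvZr ?(ltW t0) //; apply.
Qed.

Lemma bregman_ge_sqnorm n (A : set 'rV[R]_n) f g rho x y :
  convex_set_rv A -> is_grad_on A f g -> strongly_convex_on rho A f -> A x -> A y ->
  rho / 2 * sqnorm (x - y) <= bregman f g x y.
Proof.
move=> cA gA sA Ax Ay.
suff : dotv (g y) (x - y) <= f x - f y - rho / 2 * sqnorm (x - y).
  by rewrite /bregman; lra.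
apply: (@slope_le (fun t => f (t *: x + (1 - t) *: y) - f y) _ _
  (rho / 2 * sqnorm (x - y)) (enorm (x - y)) (sqrtr_ge0 _)).
- move=> t /andP [t0 t1].
  have t01 : 0 <= t <= 1 by rewrite !ltW.
  have := sA x y t Ax Ay t01; lra.
- move=> e e0; have [del del0 Hdel] := grad_on_segment cA gA Ax Ay e0.
  exists del => // t t01 tn.
  by have := Hdel t t01 tn; rewrite ler_norml => /andP [lo _]; lra.
Qed.

End Calculus.

Lemma bregman_gap_three_point (R : realType) n (A : set 'rV[R]_n)
    (Gs f : 'rV[R]_n -> R) (gGs g : 'rV[R]_n -> 'rV[R]_n) (beta gamma : R) a b p :
  (forall x x', A x -> A x' ->
     gamma * bregman f g x' x <= Gs x' - Gs x - dotv (gGs x) (x' - x)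
     /\ Gs x' - Gs x - dotv (gGs x) (x' - x) <= beta * bregman f g x' x) ->
  A a -> A b -> A p ->
  dotv (gGs p - gGs a) (b - p) <=
    beta * bregman f g b a - gamma * bregman f g p a - gamma * bregman f g b p.
Proof.
move=> gap Aa Ab Ap.
have [lo_pb _] := gap p b Ap Ab.
have [lo_ap _] := gap a p Aa Ap.
have [_ up_ab] := gap a b Aa Ab.
rewrite !(dotvBl, dotvBr) in lo_pb lo_ap up_ab *; lra.
Qed.

Section Unilateral.
Variables (R : realType) (N : nat) (d : 'I_N -> nat).
Implicit Types (p : profile R d).

Lemma upd_same p i (x : 'rV[R]_(d i)) : upd p x i = x.
Proof. by rewrite /upd; case: (i =P i) => // e; rewrite (eq_irrelevance e erefl). Qed.

Lemma upd_diff p i j (x : 'rV[R]_(d i)) : i != j -> upd p x j = p j.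
Proof. by rewrite /upd; case: (i =P j) => // ->; rewrite eqxx. Qed.

Lemma in_prod_upd (X : forall i, set 'rV[R]_(d i)) p i (x : 'rV[R]_(d i)) :
  in_prod X p -> X i x -> in_prod X (upd p x).
Proof.
move=> Xp Xx j; have [<-|ij] := eqVneq i j; first by rewrite upd_same.
by rewrite upd_diff.
Qed.

Lemma sum_dotv_upd p i (x : 'rV[R]_(d i)) (g : forall j, 'rV[R]_(d j)) :
  \sum_(j < N) dotv (g j) (upd p x j - p j) = dotv (g i) (x - p i).
Proof.
rewrite (bigD1 i) //= upd_same big1 ?addr0 // => j ji.
by rewrite upd_diff 1?eq_sym // subrr dotv0r.
Qed.

Lemma pnorm_upd p i (x : 'rV[R]_(d i)) : pnorm (psub (upd p x) p) = enorm (x - p i).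
Proof.
rewrite /pnorm /enorm /psub (bigD1 i) //= upd_same big1 ?addr0 // => j ji.
by rewrite upd_diff 1?eq_sym // subrr /sqnorm dotv0r.
Qed.

Lemma pgrad_on_segment (X : forall i, set 'rV[R]_(d i)) (f : profile R d -> R)
    (gf : forall j, profile R d -> 'rV[R]_(d j)) p i (x : 'rV[R]_(d i)) :
  convex_set_rv (X i) -> is_pgrad_on X f gf -> in_prod X p -> X i x ->
  forall e, 0 < e -> exists2 del, 0 < del & forall t, 0 < t < 1 ->
    t * enorm (x - p i) < del ->
    `|f (upd p (t *: x + (1 - t) *: p i)) - f p - t * dotv (gf i p) (x - p i)|
      <= e * (t * enorm (x - p i)).
Proof.
move=> cX gf_p Xp Xx e e0; have [del del0 Hdel] := gf_p p Xp e e0.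
exists del => // t /andP [t0 t1] tn.
have Xz : X i (t *: x + (1 - t) *: p i) by apply: cX => //; rewrite !ltW.
have := Hdel _ (in_prod_upd Xp Xz).
by rewrite pnorm_upd sum_dotv_upd segment_sub enormZ ?dotvZr ?(ltW t0) //; apply.
Qed.

Lemma best_response_foc (X : forall i, set 'rV[R]_(d i)) (f : profile R d -> R)
    (gf : forall j, profile R d -> 'rV[R]_(d j)) i
    (Gi : 'rV[R]_(d i) -> R) (gGi : 'rV[R]_(d i) -> 'rV[R]_(d i)) (mu : R) p x :
  convex_set_rv (X i) -> is_pgrad_on X f gf -> is_grad_on (X i) Gi gGi ->
  in_prod X p -> 0 < mu ->
  (forall y, X i y -> f (upd p y) - mu * Gi y <= f p - mu * Gi (p i)) ->
  X i x ->
  dotv (gf i p - mu *: gGi (p i)) (x - p i) <= 0.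
Proof.
move=> cX gf_p gGi_p Xp mu0 best Xx; rewrite dotvBl dotvZl.
apply: (@slope_le _ (fun t => f (upd p (t *: x + (1 - t) *: p i))
    - mu * Gi (t *: x + (1 - t) *: p i) - (f p - mu * Gi (p i)))
  _ 0 0 (enorm (x - p i)) (sqrtr_ge0 _)).
- move=> t /andP [t0 t1]; rewrite !mulr0 addr0 subr_le0; apply: best.
  by apply: cX => //; rewrite !ltW.
- move=> e e0.
  have [del1 del1_0 Hf] := pgrad_on_segment cX gf_p Xp Xx (divr_gt0 e0 (ltr0Sn _ 1)).
  have [del2 del2_0 HG] :=
    grad_on_segment cX gGi_p Xx (Xp i) (divr_gt0 e0 (mulr_gt0 (ltr0Sn _ 1) mu0)).
  exists (Num.min del1 del2); first by rewrite lt_min del1_0 del2_0.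
  move=> t t01; rewrite lt_min => /andP [tn1 tn2].
  have := Hf t t01 tn1; have := HG t t01 tn2; rewrite !ler_norml.
  move=> /andP [_ hG] /andP [hf _].
  have := ler_wpM2l (ltW mu0) hG.
  have -> : mu * (e / (2 * mu) * (t * enorm (x - p i))) = e / 2 * (t * enorm (x - p i)).
    by field; rewrite gt_eqF.
  lra.
Qed.

End Unilateral.

Section OneStep.
Local Unset Implicit Arguments.
Context {R : realType} {N : nat} {d : 'I_N -> nat}.
Context {X : forall i : 'I_N, set 'rV[R]_(d i)}.
Context {v : 'I_N -> profile R d -> R}.
Context {gv : forall i j : 'I_N, profile R d -> 'rV[R]_(d j)}.
Context {psi : forall i : 'I_N, 'rV[R]_(d i) -> R}.
Context {gpsi : forall i : 'I_N, 'rV[R]_(d i) -> 'rV[R]_(d i)}.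
Context {G : forall i : 'I_N, 'rV[R]_(d i) -> 'rV[R]_(d i) -> R}.
Context {gG : forall i : 'I_N, 'rV[R]_(d i) -> 'rV[R]_(d i) -> 'rV[R]_(d i)}.
Context {sigma pimu : profile R d} {L rho beta gamma mu : R}.

Hypothesis X_convex : forall i, convex_set_rv (X i).
Hypothesis v_grad : forall i, is_pgrad_on X (v i) (gv i).
Hypothesis monotone : forall p p', in_prod X p -> in_prod X p' ->
  \sum_(i < N) dotv (gv i i p - gv i i p') (p i - p' i) <= 0.
Hypothesis smooth : forall p p', in_prod X p -> in_prod X p' ->
  \sum_(i < N) sqnorm (gv i i p - gv i i p') <= L ^+ 2 * (pnorm (psub p p')) ^+ 2.
Hypothesis rho_gt0 : 0 < rho.
Hypothesis psi_grad : forall i, is_grad_on (X i) (psi i) (gpsi i).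
Hypothesis psi_sconvex : forall i, strongly_convex_on rho (X i) (psi i).
Hypothesis G_grad : forall i s, X i s ->
  is_grad_on (X i) (fun x => G i x s) (fun x => gG i x s).
Hypothesis gamma_gt0 : 0 < gamma.
Hypothesis assumptionA : forall i s x x', X i s -> X i x -> X i x' ->
  gamma * bregman (psi i) (gpsi i) x' x <= G i x' s - G i x s - dotv (gG i x s) (x' - x)
  /\ G i x' s - G i x s - dotv (gG i x s) (x' - x) <= beta * bregman (psi i) (gpsi i) x' x.
Hypothesis mu_gt0 : 0 < mu.
Hypothesis sigma_in : in_prod X sigma.
Hypothesis pimu_in : in_prod X pimu.
Hypothesis pimu_equilibrium : forall i x, X i x ->
  v i (upd pimu x) - mu * G i x (sigma i) <= v i pimu - mu * G i (pimu i) (sigma i).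

Local Notation D := (pbregman psi gpsi).

Lemma pbregman_ge_sqnorm {p q} : in_prod X p -> in_prod X q ->
  rho / 2 * \sum_(i < N) sqnorm (p i - q i) <= D p q.
Proof.
move=> Xp Xq; rewrite /pbregman mulr_sumr; apply: ler_sum => i _.
exact: bregman_ge_sqnorm (X_convex i) (psi_grad i) (psi_sconvex i) (Xp i) (Xq i).
Qed.

Lemma pbregman_ge0 {p q} : in_prod X p -> in_prod X q -> 0 <= D p q.
Proof.
move=> Xp Xq; apply: le_trans (pbregman_ge_sqnorm Xp Xq).
apply: mulr_ge0; first by rewrite divr_ge0 // ltW.
by apply: sumr_ge0 => i _; apply: sqnorm_ge0.
Qed.

Lemma gradient_gap_le {eps a} : 0 < eps -> eps * L ^+ 2 <= rho * mu * gamma / 2 ->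
  in_prod X a ->
  eps / 2 * \sum_(i < N) sqnorm (gv i i a - gv i i pimu) <= mu * gamma / 2 * D pimu a.
Proof.
move=> eps0 epsL Xa.
have Pdist : pnorm (psub a pimu) ^+ 2 = \sum_(i < N) sqnorm (pimu i - a i).
  rewrite sqr_sqrtr; last by apply: sumr_ge0 => i _; apply: sqnorm_ge0.
  by apply: eq_bigr => i _; rewrite sqnormB.
have := smooth a pimu Xa pimu_in; rewrite Pdist => gap_le.
have := pbregman_ge_sqnorm pimu_in Xa.
set SG := \sum_(i < N) _ in gap_le *; set P := \sum_(i < N) _ in gap_le * => dist_le.
have P0 : 0 <= P by apply: sumr_ge0 => i _; apply: sqnorm_ge0.
have := ler_wpM2l (ltW (divr_gt0 eps0 (ltr0Sn _ 1))) gap_le.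
have := ler_wpM2r P0 epsL.
have := ler_wpM2l (ltW (mulr_gt0 mu_gt0 gamma_gt0)) dist_le.
lra.
Qed.

(* The per-block estimate of the update's right-hand side: monotonicity
   term, Young term, and the three-point bound from Assumption A; the
   first-order condition of pimu absorbs the remaining term. *)
Lemma block_bound {eps} i {a b} : 0 < eps -> in_prod X a -> in_prod X b ->
  dotv (gv i i a - mu *: gG i (a i) (sigma i)) (b i - pimu i) <=
    dotv (gv i i a - gv i i pimu) (a i - pimu i)
    + eps / 2 * sqnorm (gv i i a - gv i i pimu)
    + 1 / (2 * eps) * sqnorm (b i - a i)
    + mu * beta * bregman (psi i) (gpsi i) (b i) (a i)
    - mu * gamma * bregman (psi i) (gpsi i) (pimu i) (a i)
    - mu * gamma * bregman (psi i) (gpsi i) (b i) (pimu i).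
Proof.
move=> eps0 Xa Xb.
have foc := best_response_foc (X_convex i) (v_grad i) (G_grad i _ (sigma_in i))
  pimu_in mu_gt0 (pimu_equilibrium i) (Xb i).
have young := dotv_young (gv i i a - gv i i pimu) (b i - a i) eps0.
have three := bregman_gap_three_point
  (fun x x' => assumptionA i (sigma i) x x' (sigma_in i))
  (Xa i) (Xb i) (pimu_in i).
have := ler_wpM2l (ltW mu_gt0) three.
rewrite !(dotvBl, dotvBr, dotvZl) in foc young *; lra.
Qed.

Lemma one_step_contraction {eta eps a b} : 0 < eta -> 0 < eps ->
  eps * L ^+ 2 <= rho * mu * gamma / 2 ->
  eta * (1 / (eps * rho) + mu * beta) <= 1 ->
  in_prod X a -> in_prod X b ->
  D pimu b - D pimu a + D b a <=
    eta * \sum_(i < N) dotv (gv i i a - mu *: gG i (a i) (sigma i)) (b i - pimu i) ->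
  D pimu b <= (1 - eta * mu * gamma / 2) * D pimu a.
Proof.
move=> eta0 eps0 epsL etaC Xa Xb update.
have blocks :=
  @ler_sum _ _ (index_enum 'I_N) xpredT _ _ (fun i _ => block_bound i eps0 Xa Xb).
rewrite !(big_split, sumrN) /= -!mulr_sumr in blocks.
rewrite /D /pbregman in update *.
have mono := monotone a pimu Xa pimu_in.
have gap := gradient_gap_le eps0 epsL Xa.
have step_sq := pbregman_ge_sqnorm Xb Xa.
have Dbp0 := pbregman_ge0 Xb pimu_in.
have Dba0 := pbregman_ge0 Xb Xa.
rewrite /pbregman in gap step_sq Dbp0 Dba0.
set Q := \sum_(i < N) sqnorm (b i - a i) in blocks step_sq.
set Dba := \sum_(i < N) bregman _ _ (b i) (a i) in blocks update step_sq Dba0 *.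
have young_le : 1 / (2 * eps) * Q <= 1 / (eps * rho) * Dba.
  have -> : 1 / (2 * eps) * Q = 1 / (eps * rho) * (rho / 2 * Q).
    by field; rewrite !gt_eqF.
  by rewrite ler_wpM2l // divr_ge0 // ltW ?mulr_gt0.
have rhs_le : \sum_(i < N) dotv (gv i i a - mu *: gG i (a i) (sigma i)) (b i - pimu i)
    <= - (mu * gamma / 2) * D pimu a + (1 / (eps * rho) + mu * beta) * Dba.
  rewrite /pbregman.
  have := mulr_ge0 (ltW (mulr_gt0 mu_gt0 gamma_gt0)) Dbp0; lra.
have := ler_wpM2l (ltW eta0) rhs_le.
have := ler_wpM2r Dba0 etaC.
rewrite /pbregman; lra.
Qed.

End OneStep.

Section StepSize.
Variables (R : realType) (L rho beta gamma mu eta : R).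
Hypotheses (rho_gt0 : 0 < rho) (beta_gt0 : 0 < beta) (gamma_gt0 : 0 < gamma)
  (mu_gt0 : 0 < mu) (eta_gt0 : 0 < eta).
Hypothesis eta_le : eta <= 2 * mu * gamma * rho ^+ 2 /
  (mu ^+ 2 * gamma * rho ^+ 2 * (gamma + 2 * beta) + 8 * L ^+ 2).

Lemma eta_mul_le :
  eta * (mu ^+ 2 * gamma * rho ^+ 2 * (gamma + 2 * beta) + 8 * L ^+ 2)
    <= 2 * mu * gamma * rho ^+ 2.
Proof.
rewrite -ler_pdivlMr //; apply: ltr_wpDr; first by rewrite mulr_ge0 ?sqr_ge0.
by rewrite !mulr_gt0 ?exprn_gt0 ?addr_gt0 ?mulr_gt0.
Qed.

Lemma contraction_factor_ge0 : 0 <= 1 - eta * mu * gamma / 2.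
Proof.
have K0 : 0 < mu * gamma * rho ^+ 2 by rewrite !mulr_gt0 ?exprn_gt0.
suff : eta * mu * gamma * (mu * gamma * rho ^+ 2) <= 2 * (mu * gamma * rho ^+ 2).
  by rewrite ler_pM2r //; lra.
have slack : 0 <= 2 * mu ^+ 2 * gamma * beta * rho ^+ 2 + 8 * L ^+ 2.
  apply: addr_ge0; last by rewrite mulr_ge0 ?sqr_ge0.
  by apply/ltW; rewrite !mulr_gt0 ?exprn_gt0.
have := mulr_ge0 (ltW eta_gt0) slack.
have := eta_mul_le; lra.
Qed.

Lemma young_weight_exists : exists eps : R,
  [/\ 0 < eps, eps * L ^+ 2 <= rho * mu * gamma / 2
    & eta * (1 / (eps * rho) + mu * beta) <= 1].
Proof.
pose M := 4 * L ^+ 2 + mu ^+ 2 * gamma ^+ 2 * rho ^+ 2.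
have K0 : 0 < mu * gamma * rho ^+ 2 by rewrite !mulr_gt0 ?exprn_gt0.
have L0 : 0 <= 4 * L ^+ 2 by rewrite mulr_ge0 ?sqr_ge0.
have M0 : 0 < M by apply: ltr_wpDl => //; rewrite !mulr_gt0 ?exprn_gt0.
exists (2 * mu * gamma * rho / M); split.
- by rewrite divr_gt0 // !mulr_gt0.
- have -> : 2 * mu * gamma * rho / M * L ^+ 2 = rho * mu * gamma / 2 * (4 * L ^+ 2 / M).
    by field; rewrite gt_eqF.
  by rewrite ger_pMr ?divr_gt0 ?mulr_gt0 // ler_pdivrMr // mul1r lerDl ltW ?mulr_gt0 ?exprn_gt0.
- have -> : 1 / (2 * mu * gamma * rho / M * rho) + mu * beta
      = (M + 2 * mu ^+ 2 * gamma * beta * rho ^+ 2) / (2 * (mu * gamma * rho ^+ 2)).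
    by field; rewrite !gt_eqF.
  rewrite mulrA ler_pdivrMr ?mulr_gt0 // mul1r.
  have extra : 0 <= eta * (4 * L ^+ 2) by rewrite mulr_ge0 // ltW.
  have := eta_mul_le; rewrite /M; lra.
Qed.

End StepSize.

Lemma geometric_decay (R : realType) (x : nat -> R) (c : R) : 0 <= c ->
  (forall t, x t.+1 <= c * x t) -> forall t, x t <= x 0%N * c ^+ t.
Proof.
move=> c0 step; elim=> [|t IH]; first by rewrite expr0 mulr1.
by apply: le_trans (step t) _; rewrite exprS mulrCA ler_wpM2l.
Qed.


Theorem lemma2 (R : realType) (N : nat) (d : 'I_N -> nat)
  (X : forall i : 'I_N, set 'rV[R]_(d i))
  (v : 'I_N -> profile R d -> R)
  (gv : forall i j : 'I_N, profile R d -> 'rV[R]_(d j))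
  (L rho beta gamma mu eta : R)
  (psi : forall i : 'I_N, 'rV[R]_(d i) -> R)
  (gpsi : forall i : 'I_N, 'rV[R]_(d i) -> 'rV[R]_(d i))
  (G : forall i : 'I_N, 'rV[R]_(d i) -> 'rV[R]_(d i) -> R)
  (gG : forall i : 'I_N, 'rV[R]_(d i) -> 'rV[R]_(d i) -> 'rV[R]_(d i))
  (sigma pimu : profile R d) (pi : nat -> profile R d) :
  (* the game *)
  (1 <= N)%N ->
  (forall i, X i !=set0) ->
  (forall i, compact (X i)) ->
  (forall i, convex_set_rv (X i)) ->
  (forall i, is_pgrad_on X (v i) (gv i)) ->
  (* monotone *)
  (forall p p', in_prod X p -> in_prod X p' ->
     \sum_(i < N) dotv (gv i i p - gv i i p') (p i - p' i) <= 0) ->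
  (* L-smooth *)
  (forall p p', in_prod X p -> in_prod X p' ->
     \sum_(i < N) sqnorm (gv i i p - gv i i p') <= L ^+ 2 * (pnorm (psub p p')) ^+ 2) ->
  (* regularizer *)
  0 < rho ->
  (forall i, is_grad_on (X i) (psi i) (gpsi i)) ->
  (forall i, strongly_convex_on rho (X i) (psi i)) ->
  (* perturbation *)
  (forall i s x, X i s -> X i x -> 0 <= G i x s) ->
  (forall i s, X i s -> is_grad_on (X i) (fun x => G i x s) (fun x => gG i x s)) ->
  (forall i s, X i s -> strictly_convex_on (X i) (fun x => G i x s)) ->
  (forall i s, X i s -> G i s s = 0) ->
  (* Assumption A *)
  0 < beta -> 0 < gamma ->
  (forall i s x x', X i s -> X i x -> X i x' ->
     gamma * bregman (psi i) (gpsi i) x' x <=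
       G i x' s - G i x s - dotv (gG i x s) (x' - x)
     /\ G i x' s - G i x s - dotv (gG i x s) (x' - x) <=
       beta * bregman (psi i) (gpsi i) x' x) ->
  (* perturbed equilibrium *)
  0 < mu ->
  in_prod X sigma ->
  in_prod X pimu ->
  (forall i x, X i x ->
     v i (upd pimu x) - mu * G i x (sigma i) <= v i pimu - mu * G i (pimu i) (sigma i)) ->
  (* step size *)
  0 < eta ->
  eta <= 2 * mu * gamma * rho ^+ 2 /
           (mu ^+ 2 * gamma * rho ^+ 2 * (gamma + 2 * beta) + 8 * L ^+ 2) ->
  (* the sequence *)
  (forall t, in_prod X (pi t)) ->
  (forall t : nat,
     pbregman psi gpsi pimu (pi t.+1) - pbregman psi gpsi pimu (pi t)
       + pbregman psi gpsi (pi t.+1) (pi t)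
     <= eta * \sum_(i < N)
          dotv (gv i i (pi t) - mu *: gG i (pi t i) (sigma i)) (pi t.+1 i - pimu i)) ->
  forall t : nat,
    pbregman psi gpsi pimu (pi t)
      <= pbregman psi gpsi pimu (pi 0%N) * (1 - eta * mu * gamma / 2) ^+ t.
Proof.
move=> _ _ _ X_convex v_grad monotone smooth rho_gt0 psi_grad psi_sconvex _ G_grad _ _
  beta_gt0 gamma_gt0 assumptionA mu_gt0 sigma_in pimu_in equilibrium eta_gt0 eta_le
  pi_in update.
have [eps [eps_gt0 eps_small eta_small]] :=
  young_weight_exists rho_gt0 beta_gt0 gamma_gt0 mu_gt0 eta_gt0 eta_le.
apply: geometric_decay.
  exact: contraction_factor_ge0 rho_gt0 beta_gt0 gamma_gt0 mu_gt0 eta_gt0 eta_le.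
move=> t; apply: (one_step_contraction X_convex v_grad monotone smooth rho_gt0
  psi_grad psi_sconvex G_grad gamma_gt0 assumptionA mu_gt0 sigma_in pimu_in
  equilibrium eta_gt0 eps_gt0 eps_small eta_small (pi_in t) (pi_in t.+1) (update t)).
Qed.
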